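(* Let $T_1$ and $T_2$ be two $L_1$-periodic tilings of type $(\gamma_1,\gamma_2,\gamma_3)$ with $\gamma_1,\gamma_2,\gamma_3>0$. Then $T_1$ and $T_2$ are connected by a sequence of flips.
   Context: Let $u^\top=(1,0)$, $v^\top=-(\tfrac12,\tfrac{\sqrt3}{2})$, $w=-(u+v)$, $L_0=\langle u,v\rangle$, and $L_1\le L_0$ a full-rank sublattice. An $L_1$-periodic tiling (periodic lozenge tiling of the plane) is an $L_1$-invariant map $T\colon L_0\to\{U,V,W\}$ such that for every $x$ exactly one of $T(x)=W$, $T(x+u)=V$, $T(x-v)=U$ holds; $T(x)$ removes one arrow of the upward triangle $x\to x+u\to x-v\to x$ ($U$: $x\to x+u$; $V$: $x-v\to x$; $W$: $x+u\to x-v$), and the remaining arrows are said to be in $T$. The type of $T$ counts the values $U,V,W$ over $L_0/L_1$. A source (resp. sink) of $T$ is a point where no arrow in $T$ ends (resp. starts), i.e. three lozenges of three different types meet there. A flip at a source or sink $z$ replaces the three lozenges meeting at each point of $z+L_1$ by the opposite configuration (turning sources into sinks and vice versa); it preserves the type. *)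

(* Points of L0 = <u,v> are encoded by integer coordinates:
   (a,b) : int * int  stands for  a*u + b*v, so u = (1,0), v = (0,1),
   w = -(u+v) = (-1,-1). *)
From HB Require Import structures.
From mathcomp Require Import all_boot all_order all_algebra.
Set Implicit Arguments. Unset Strict Implicit. Unset Printing Implicit Defensive.
Import Order.TTheory GRing.Theory Num.Theory.
Local Open Scope ring_scope.

Inductive tile := U | V | W.

Definition pt := (int * int)%type.
Definition padd (x y : pt) : pt := (x.1 + y.1, x.2 + y.2).
Definition psub (x y : pt) : pt := (x.1 - y.1, x.2 - y.2).
Definition pu : pt := (1, 0).
Definition pv : pt := (0, 1).

Definition full_rank (p q : pt) : bool := p.1 * q.2 - p.2 * q.1 != 0.
Definition inL1 (p q : pt) (x : pt) : Prop :=
  exists m n : int, x = (m * p.1 + n * q.1, m * p.2 + n * q.2).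
Definition congL1 (p q : pt) (x y : pt) : Prop := inL1 p q (psub x y).

Definition exactly_one (A B C : Prop) : Prop :=
  (A /\ ~ B /\ ~ C) \/ (~ A /\ B /\ ~ C) \/ (~ A /\ ~ B /\ C).

Definition is_tiling (p q : pt) (T : pt -> tile) : Prop :=
  (forall x l, inL1 p q l -> T (padd x l) = T x) /\
  (forall x, exactly_one (T x = W) (T (padd x pu) = V) (T (psub x pv) = U)).

Definition isU (t : tile) : bool := if t is U then true else false.
Definition isV (t : tile) : bool := if t is V then true else false.
Definition isW (t : tile) : bool := if t is W then true else false.

Definition has_type (p q : pt) (T : pt -> tile) (g1 g2 g3 : nat) : Prop :=
  exists s : seq pt,
    (forall x, exists2 y, y \in s & congL1 p q x y) /\
    (forall i j, (i < j < size s)%N ->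
        ~ congL1 p q (nth (0,0) s i) (nth (0,0) s j)) /\
    count (fun y => isU (T y)) s = g1 /\
    count (fun y => isV (T y)) s = g2 /\
    count (fun y => isW (T y)) s = g3.

(* Arrows of the up triangle at x: x -> x+u (removed iff T x = U),
   x+u -> x-v (removed iff T x = W), x-v -> x (removed iff T x = V).
   No arrow in T ends at z   iff T(z-u)=U, T(z+v)=W, T(z)=V.
   No arrow in T starts at z iff T(z)=U, T(z-u)=W, T(z+v)=V. *)
Definition is_source (T : pt -> tile) (z : pt) : Prop :=
  T (psub z pu) = U /\ T (padd z pv) = W /\ T z = V.
Definition is_sink (T : pt -> tile) (z : pt) : Prop :=
  T z = U /\ T (psub z pu) = W /\ T (padd z pv) = V.

(* T' is obtained from T by the flip at z (applied at every point of z+L1):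
   the three up-triangles containing each point of z+L1 (those at z, z-u, z+v)
   get the opposite configuration, everything else is unchanged. *)
Definition flip_step (p q : pt) (T T' : pt -> tile) : Prop :=
  exists z,
    (forall x, ~ congL1 p q x z -> ~ congL1 p q x (psub z pu) ->
               ~ congL1 p q x (padd z pv) -> T' x = T x) /\
    ((is_source T z /\
      forall x, (congL1 p q x z -> T' x = U) /\
                (congL1 p q x (psub z pu) -> T' x = W) /\
                (congL1 p q x (padd z pv) -> T' x = V)) \/
     (is_sink T z /\
      forall x, (congL1 p q x z -> T' x = V) /\
                (congL1 p q x (psub z pu) -> T' x = U) /\
                (congL1 p q x (padd z pv) -> T' x = W))).

Inductive flip_connected (p q : pt) : (pt -> tile) -> (pt -> tile) -> Prop :=
  | fc_refl T : flip_connected p q T T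
  | fc_step T T' T'' : flip_step p q T T' -> flip_connected p q T' T'' ->
                       flip_connected p q T T''.

(* A tiling T carries a height function h on L0 that goes up by 1
   along each arrow of T and down by 2 along each removed arrow.  The type of an
   L1-periodic tiling determines the average slope of its height, so for two
   tilings of the same type the difference D = h1 - h2 is L1-periodic, hence
   takes finitely many values, all congruent mod 3.  Unless D is constant, pick
   x maximizing D and, among such points, maximizing the periodic potential
   N h2 - tilt.  Since the type is positive, this potential strictly increases
   along every ascending step of h2, which forces T1 to have a sink at x.  The
   flip at x lowers D by 3 on x + L1, so finitely many flips make D constant,
   i.e. T1 = T2. *)

From mathcomp Require Import all_boot all_order all_algebra zify ring.
From mathcomp Require Import boolp.
Set Implicit Arguments. Unset Strict Implicit. Unset Printing Implicit Defensive.
Import Order.TTheory GRing.Theory Num.Theory.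
Local Open Scope ring_scope.

Ltac pt_eq := unfold padd, psub, pu, pv; apply: injective_projections => /=; lia.

Definition pw : pt := (-1, -1).

Lemma int_ind_iff (P : int -> Prop) :
  P 0 -> (forall n, P n <-> P (n + 1)) -> forall n, P n.
Proof.
move=> P0 PS; elim/int_rect => // n; first by move/PS; rewrite -addn1 PoszD.
by move=> Pn; apply/PS; have -> : - (n.+1)%:Z + 1 = - n%:Z by lia.
Qed.

Lemma pt_ind (P : pt -> Prop) : P (0, 0) ->
  (forall y, P y <-> P (padd y pu)) -> (forall y, P y <-> P (padd y pv)) ->
  forall y, P y.
Proof.
move=> P0 Pu Pv [a b].
have Pa0 a' : P (a', 0).
  elim/int_ind_iff: a' => // n; have := Pu (n, 0); congr (_ <-> P _); pt_eq.
elim/int_ind_iff: b => // n; have := Pv (a, n); congr (_ <-> P _); pt_eq.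
Qed.

Lemma pt_const (A : Type) (f : pt -> A) :
  (forall y, f (padd y pu) = f y) -> (forall y, f (padd y pv) = f y) ->
  forall y, f y = f (0, 0).
Proof. by move=> fu fv; apply: pt_ind => // y; rewrite ?fu ?fv. Qed.

Section Lattice.
Variables p q : pt.
Local Notation cong := (congL1 p q).

Definition congL1_invariant (A : Type) (f : pt -> A) := forall x y, cong x y -> f x = f y.

Lemma inL1_0 : inL1 p q (0, 0).
Proof. by exists 0, 0; rewrite !mul0r !addr0. Qed.

Lemma inL1D x y : inL1 p q x -> inL1 p q y -> inL1 p q (padd x y).
Proof.
case=> m [n ->] [m' [n' ->]]; exists (m + m'), (n + n'); rewrite /padd /=.
congr pair; ring.
Qed.

Lemma inL1N x : inL1 p q x -> inL1 p q (psub (0, 0) x).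
Proof. case=> m [n ->]; exists (- m), (- n); rewrite /psub /=; congr pair; ring. Qed.

Lemma congL1_refl x : cong x x.
Proof. by rewrite /congL1 (_ : psub x x = (0, 0)); [exact: inL1_0 | pt_eq]. Qed.

Lemma congL1_sym x y : cong x y -> cong y x.
Proof. by rewrite /congL1 => /inL1N; congr inL1; pt_eq. Qed.

Lemma congL1_trans x y z : cong x y -> cong y z -> cong x z.
Proof. by rewrite /congL1 => xy /(inL1D xy); congr inL1; pt_eq. Qed.

Lemma congL1_translate x y k : cong (padd x k) (padd y k) <-> cong x y.
Proof. by rewrite /congL1 (_ : psub (padd x k) (padd y k) = psub x y) //; pt_eq. Qed.

Lemma congL1_addl x y k : cong (padd x k) y <-> cong x (psub y k).
Proof. by rewrite /congL1 (_ : psub (padd x k) y = psub x (psub y k)) //; pt_eq. Qed.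

Lemma congL1_shift x l : inL1 p q l -> cong (padd x l) x.
Proof. by rewrite /congL1; congr inL1; pt_eq. Qed.

Lemma congL1_shiftl x z l : inL1 p q l -> cong (padd x l) z <-> cong x z.
Proof.
move/(congL1_shift x) => xl; split; first exact: congL1_trans (congL1_sym xl).
exact: congL1_trans xl.
Qed.

Lemma congL1_eql x y z : cong x y -> (cong x z <-> cong y z).
Proof. by move=> xy; split; [apply: congL1_trans (congL1_sym xy) | apply: congL1_trans xy]. Qed.

Lemma congL1_invariantP (A : Type) (f : pt -> A) :
  (forall y l, inL1 p q l -> f (padd y l) = f y) -> congL1_invariant f.
Proof.
by move=> fl x y xy; rewrite -(fl y _ xy) (_ : padd y (psub x y) = x) //; pt_eq.
Qed.

Lemma tiling_invariant T : is_tiling p q T -> congL1_invariant T.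
Proof. by case=> /congL1_invariantP. Qed.

Lemma slope_diff_invariant (N : int) (t : pt -> int) (h1 h2 : pt -> int) : N != 0 ->
  (forall y l, inL1 p q l -> N * (h1 (padd y l) - h1 y) = t l) ->
  (forall y l, inL1 p q l -> N * (h2 (padd y l) - h2 y) = t l) ->
  congL1_invariant (fun y => h1 y - h2 y).
Proof.
move=> N_neq0 slope1 slope2; apply: congL1_invariantP => y l Hl.
by have := slope1 y l Hl; rewrite -(slope2 y l Hl) => /(mulfI N_neq0); lia.
Qed.

End Lattice.

Definition wt (b : bool) : int := if b then -2 else 1.
Definition wu (T : pt -> tile) y := wt (isU (T y)).
Definition wv (T : pt -> tile) y := wt (isV (T (padd y pv))).
Definition ww (T : pt -> tile) y := wt (isW (T (psub y pu))).

(* [wu], [wv], [ww] are the height increments along u, v, w: +1 along an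
   arrow of T and -2 along a removed one, so they sum to 0 around every
   triangle. *)
Definition is_height (T : pt -> tile) (h : pt -> int) :=
  forall y, h (padd y pu) - h y = wu T y /\ h (padd y pv) - h y = wv T y.

Definition locally_tiling (T : pt -> tile) :=
  forall x, exactly_one (T x = W) (T (padd x pu) = V) (T (psub x pv) = U).

Lemma up_triangle T z : wu T z + ww T (padd z pu) + wv T (psub z pv) = 0.
Proof.
rewrite /wu /ww /wv (_ : psub (padd z pu) pu = z) 1?(_ : padd (psub z pv) pv = z);
  try pt_eq.
by case: (T z).
Qed.

Lemma exactly_oneE (t1 t2 t3 : tile) :
  exactly_one (t1 = W) (t2 = V) (t3 = U) <->
  wt (isW t1) + wt (isV t2) + wt (isU t3) = 0.
Proof.
by rewrite /exactly_one; case: t1; case: t2; case: t3 => /=; split => //;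
  (intuition discriminate) || lia.
Qed.

Lemma down_triangle T x : locally_tiling T ->
  wt (isW (T x)) + wt (isV (T (padd x pu))) + wt (isU (T (psub x pv))) = 0.
Proof. by move/(_ x)/exactly_oneE. Qed.

Lemma lozenge_square T y : locally_tiling T ->
  wu T y + wv T (padd y pu) = wv T y + wu T (padd y pv).
Proof.
move=> HT; have := up_triangle T (padd y pv); have := down_triangle (padd y pv) HT.
rewrite /wu /wv /ww (_ : psub (padd (padd y pv) pu) pu = padd y pv); last by pt_eq.
rewrite (_ : padd (padd y pu) pv = padd (padd y pv) pu); last by pt_eq.
by rewrite (_ : psub (padd y pv) pv = y); [lia | pt_eq].
Qed.

Definition isum (f : int -> int) (n : int) : int :=
  match n with
  | Posz k => \sum_(i < k) f i
  | Negz k => - \sum_(i < k.+1) f (Negz i)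
  end.

Lemma isum0 f : isum f 0 = 0.
Proof. exact: big_ord0. Qed.

Lemma isumS f n : isum f (n + 1) = isum f n + f n.
Proof.
case: n => [k|[|k]].
- by rewrite (_ : k%:Z + 1 = k.+1) /isum ?big_ord_recr //; lia.
- by rewrite (_ : Negz 0 + 1 = 0) // isum0 /isum big_ord_recr /= big_ord0; lia.
- rewrite (_ : Negz k.+1 + 1 = Negz k); last by lia.
  by rewrite /isum [in RHS]big_ord_recr /= opprD addrNK.
Qed.

Lemma height_exists T : locally_tiling T -> exists h, is_height T h.
Proof.
move=> HT.
exists (fun x => isum (fun i => wu T (i, 0)) x.1 + isum (fun j => wv T (x.1, j)) x.2).
move=> [a b]; rewrite /padd /= !addr0; split; last by rewrite [isum _ (b + 1)]isumS; lia.
elim/int_ind_iff: b => [|n]; first by rewrite !isum0 isumS; lia.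
have := lozenge_square (a, n) HT; rewrite /padd /= !addr0 !isumS; lia.
Qed.

Lemma height_stepw T h y : is_height T h -> h (padd y pw) - h y = ww T y.
Proof.
move=> Hh; have := up_triangle T (psub y pu).
have [hu _] := Hh (psub y pu); have [_ hv] := Hh (padd y pw).
rewrite (_ : padd (psub y pu) pu = y) in hu *; last by pt_eq.
rewrite (_ : psub (psub y pu) pv = padd y pw) in hv *; last by pt_eq.
rewrite (_ : padd (padd y pw) pv = psub y pu) in hv; last by pt_eq.
lia.
Qed.

Lemma height_locally_tiling T h : is_height T h -> locally_tiling T.
Proof.
move=> Hh x; apply/exactly_oneE.
have hw := height_stepw (padd x pu) Hh.
have [hu _] := Hh (psub x pv); have [_ hv] := Hh (padd (psub x pv) pu).
move: hw hu hv; rewrite /ww /wu /wv.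
rewrite (_ : psub (padd x pu) pu = x); last by pt_eq.
rewrite (_ : padd (padd x pu) pw = psub x pv); last by pt_eq.
rewrite (_ : padd (padd (psub x pv) pu) pv = padd x pu); last by pt_eq.
lia.
Qed.

Lemma wt_mod3 b : exists d : int, wt b = 1 + 3 * d.
Proof. by case: b; [exists (-1) | exists 0]. Qed.

Lemma height_mod3 T h y : is_height T h ->
  exists k : int, h y = h (0, 0) + y.1 + y.2 + 3 * k.
Proof.
move=> Hh; elim/pt_ind: y => [|y|y]; first by exists 0; rewrite /=; lia.
- have [hu _] := Hh y; have [d wE] := wt_mod3 (isU (T y)); rewrite /wu wE in hu.
  by rewrite /padd /pu /= in hu *; split=> -[k hk]; [exists (k + d) | exists (k - d)]; lia.
- have [_ hv] := Hh y; have [d wE] := wt_mod3 (isV (T (padd y pv))); rewrite /wv wE in hv.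
  by rewrite /padd /pv /= in hv *; split=> -[k hk]; [exists (k + d) | exists (k - d)]; lia.
Qed.

Lemma height_diff_mod3 T1 T2 h1 h2 y z : is_height T1 h1 -> is_height T2 h2 ->
  exists k : int, h1 y - h2 y = h1 z - h2 z + 3 * k.
Proof.
move=> Hh1 Hh2.
have [[k1 E1] [k2 E2]] := (height_mod3 y Hh1, height_mod3 y Hh2).
have [[k3 E3] [k4 E4]] := (height_mod3 z Hh1, height_mod3 z Hh2).
by exists (k1 - k2 - k3 + k4); lia.
Qed.

Lemma height_diff_const T1 T2 h1 h2 (c : int) : is_height T1 h1 -> is_height T2 h2 ->
  (forall y, h1 y - h2 y = c) -> T1 = T2.
Proof.
move=> Hh1 Hh2 D; apply: functional_extensionality_dep => y.
have [[hu1 _] [hu2 _]] := (Hh1 y, Hh2 y).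
have [[_ hv1] [_ hv2]] := (Hh1 (psub y pv), Hh2 (psub y pv)).
have := D y; have := D (padd y pu); have := D (psub y pv).
move: hu1 hu2 hv1 hv2; rewrite /wu /wv (_ : padd (psub y pv) pv = y); last by pt_eq.
by case: (T1 y); case: (T2 y) => //=; lia.
Qed.

Section Periodic.
Variables p q : pt.

Lemma wu_invariant T : is_tiling p q T -> congL1_invariant p q (wu T).
Proof. by move=> HT x y xy; rewrite /wu (tiling_invariant HT xy). Qed.

Lemma wv_invariant T : is_tiling p q T -> congL1_invariant p q (wv T).
Proof.
move=> HT x y xy; rewrite /wv (tiling_invariant HT (_ : congL1 p q _ (padd y pv))) //.
exact/congL1_translate.
Qed.

Lemma height_period_incr T h l y z : is_tiling p q T -> is_height T h -> inL1 p q l ->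
  h (padd y l) - h y = h (padd z l) - h z.
Proof.
move=> HT Hh Hl.
suff incrE x : h (padd x l) - h x = h (padd (0, 0) l) - h (0, 0) by rewrite !incrE.
apply: (pt_const (f := fun x => h (padd x l) - h x)) => {}x.
- have [[hu _] [hu' _]] := (Hh x, Hh (padd x l)).
  rewrite (_ : padd (padd x pu) l = padd (padd x l) pu); last by pt_eq.
  by rewrite (wu_invariant HT (congL1_shift x Hl)) in hu'; lia.
- have [[_ hv] [_ hv']] := (Hh x, Hh (padd x l)).
  rewrite (_ : padd (padd x pv) l = padd (padd x l) pv); last by pt_eq.
  by rewrite (wv_invariant HT (congL1_shift x Hl)) in hv'; lia.
Qed.

End Periodic.

(* For a tiling of type (cU, cV, cW) and N = cU + cV + cW, a period k raises
   the height by [tilt cU cV cW k / N]: a u-step goes down by 2 on a fraction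
   cU / N of the classes and up by 1 on the others. *)
Definition tilt (cU cV cW : int) (k : pt) : int :=
  k.1 * (cV + cW - 2 * cU) + k.2 * (cU + cW - 2 * cV).

Lemma tiltD cU cV cW x y : tilt cU cV cW (padd x y) = tilt cU cV cW x + tilt cU cV cW y.
Proof. rewrite /tilt /=; ring. Qed.

Definition repsys (p q : pt) (s : seq pt) :=
  (forall x, exists2 y, y \in s & congL1 p q x y) /\
  (forall i j, (i < j < size s)%N -> ~ congL1 p q (nth (0, 0) s i) (nth (0, 0) s j)).

Lemma seq_argmax (T : eqType) (s : seq T) (f : T -> int) : s != [::] ->
  exists2 x, x \in s & forall y, y \in s -> f y <= f x.
Proof.
elim: s => [|a s IH] // _; have [-> | /IH [b bs bmax]] := eqVneq s [::].
  by exists a => [|y]; rewrite ?mem_head // inE => /eqP ->.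
have [ab | ba] := lerP (f a) (f b).
  by exists b => [|y]; rewrite inE ?bs ?orbT // => /orP [/eqP -> | /bmax].
exists a => [|y]; rewrite ?mem_head // inE => /orP [/eqP -> // | /bmax fb].
exact: le_trans fb (ltW ba).
Qed.

Lemma count_tiles (T : pt -> tile) (s : seq pt) :
  (count (fun y => isU (T y)) s + count (fun y => isV (T y)) s
   + count (fun y => isW (T y)) s = size s)%N.
Proof. by elim: s => //= a s; case: (T a) => /=; lia. Qed.

Lemma sum_wt (s : seq pt) (b : pt -> bool) :
  \sum_(y <- s) wt (b y) = (size s)%:Z - 3 * (count b s)%:Z.
Proof. by elim: s => [|a s IH]; rewrite ?big_nil // big_cons IH /= /wt; case: (b a); lia. Qed.

Section Repsys.
Variables (p q : pt) (s : seq pt).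
Hypothesis s_repsys : repsys p q s.
Local Notation cong := (congL1 p q).

Lemma repsys_nth_inj i j : (i < size s)%N -> (j < size s)%N ->
  cong (nth (0, 0) s i) (nth (0, 0) s j) -> i = j.
Proof.
case: s_repsys => _ sep ilt jlt ij; case: (ltngtP i j) => // [lt | lt].
  by have := sep i j; rewrite lt jlt => /(_ isT).
by have := sep j i; rewrite lt ilt => /(_ isT (congL1_sym ij)).
Qed.

Lemma repsys_inj y y' : y \in s -> y' \in s -> cong y y' -> y = y'.
Proof.
move=> ys y's; rewrite -(nth_index (0, 0) ys) -(nth_index (0, 0) y's).
by move/repsys_nth_inj => -> //; rewrite index_mem.
Qed.

Lemma repsys_uniq : uniq s.
Proof.
apply/(uniqP (0, 0)) => i j ilt jlt E.
by apply: repsys_nth_inj; rewrite // E; apply: congL1_refl.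
Qed.

Lemma repsys_sum_shift (f : pt -> int) k : congL1_invariant p q f ->
  \sum_(y <- s) f (padd y k) = \sum_(y <- s) f y.
Proof.
case: (s_repsys) => cover _ finv.
pose r y := s2val (cid2 (cover (padd y k))).
have rs y : r y \in s by rewrite /r; case: (cid2 _).
have yr y : cong (padd y k) (r y) by rewrite /r; case: (cid2 _).
rewrite (eq_bigr (f \o r)) => [|y _]; last exact: finv.
have rs_uniq : uniq (map r s).
  rewrite map_inj_in_uniq ?repsys_uniq // => y y' ys y's ry.
  apply: repsys_inj => //; apply/(congL1_translate p q _ _ k).
  by apply: congL1_trans (yr y) _; rewrite ry; apply/congL1_sym.
have rs_sub : {subset map r s <= s} by move=> z /mapP [y _ ->].
have [_ rsE] := uniq_min_size rs_uniq rs_sub (eq_leq (esym (size_map r s))).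
by rewrite -(big_map r xpredT f); apply/perm_big/uniq_perm; rewrite ?repsys_uniq.
Qed.

Lemma repsys_argmax (f : pt -> int) (P : pt -> bool) :
  congL1_invariant p q f -> congL1_invariant p q P -> (exists y, P y) ->
  exists x, [/\ x \in s, P x & forall y, P y -> f y <= f x].
Proof.
case: (s_repsys) => cover _ finv Pinv [y0 Py0]; have [r0 r0s y0r0] := cover y0.
have : [seq y <- s | P y] != [::].
  apply/eqP => /(congr1 (fun t => r0 \in t)).
  by rewrite mem_filter -(Pinv _ _ y0r0) Py0 r0s.
case/(seq_argmax f) => x; rewrite mem_filter => /andP [Px xs] xmax; exists x; split=> // y Py.
have [r rs yr] := cover y; rewrite (finv _ _ yr); apply: xmax.
by rewrite mem_filter -(Pinv _ _ yr) Py rs.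
Qed.

Lemma repsys_max (f : pt -> int) : congL1_invariant p q f ->
  exists x, forall y, f y <= f x.
Proof.
move=> finv; have [x [_ _ xmax]] := repsys_argmax (P := predT) finv (fun _ _ _ => erefl)
  (ex_intro _ (0, 0) isT).
by exists x => y; apply: xmax.
Qed.

Lemma sum_incr_shift (f : pt -> int) k d :
  congL1_invariant p q (fun y => f (padd y d) - f y) ->
  \sum_(y <- s) (f (padd y (padd k d)) - f y) =
  \sum_(y <- s) (f (padd y k) - f y) + \sum_(y <- s) (f (padd y d) - f y).
Proof.
move=> incr_inv; rewrite -(repsys_sum_shift k incr_inv) -big_split /=.
by apply: eq_bigr => y _; rewrite (_ : padd y (padd k d) = padd (padd y k) d); [lia | pt_eq].
Qed.

Lemma sum_height_incr T h k : is_tiling p q T -> is_height T h ->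
  \sum_(y <- s) (h (padd y k) - h y) =
  k.1 * ((size s)%:Z - 3 * (count (fun y => isU (T y)) s)%:Z) +
  k.2 * ((size s)%:Z - 3 * (count (fun y => isV (T y)) s)%:Z).
Proof.
move=> HT Hh.
have incr_u : (fun y => h (padd y pu) - h y) =1 wu T by move=> y; case: (Hh y).
have incr_v : (fun y => h (padd y pv) - h y) =1 wv T by move=> y; case: (Hh y).
have sum_u : \sum_(y <- s) (h (padd y pu) - h y) =
    (size s)%:Z - 3 * (count (fun y => isU (T y)) s)%:Z.
  by rewrite (eq_bigr _ (fun y _ => incr_u y)) sum_wt.
have sum_v : \sum_(y <- s) (h (padd y pv) - h y) =
    (size s)%:Z - 3 * (count (fun y => isV (T y)) s)%:Z.
  rewrite (eq_bigr _ (fun y _ => incr_v y)) /wv.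
  rewrite (repsys_sum_shift pv (f := fun y => wt (isV (T y)))) ?sum_wt //.
  by move=> x y xy; rewrite (tiling_invariant HT xy).
elim/pt_ind: k => [|k|k].
- by rewrite big1 /= => [|y _]; [lia | rewrite (_ : padd y (0, 0) = y) ?subrr //; pt_eq].
- rewrite sum_incr_shift ?sum_u /padd /pu /=; first by split; lia.
  by move=> x y xy; rewrite !incr_u (wu_invariant HT xy).
- rewrite sum_incr_shift ?sum_v /padd /pv /=; first by split; lia.
  by move=> x y xy; rewrite !incr_v (wv_invariant HT xy).
Qed.

Lemma height_slope T h (cU cV cW : nat) :
  is_tiling p q T -> is_height T h ->
  count (fun z => isU (T z)) s = cU -> count (fun z => isV (T z)) s = cV ->
  count (fun z => isW (T z)) s = cW ->
  forall y l, inL1 p q l -> (cU%:Z + cV%:Z + cW%:Z) * (h (padd y l) - h y) = tilt cU cV cW l.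
Proof.
move=> HT Hh cUE cVE cWE y l Hl.
have sizeE : size s = (cU + cV + cW)%N by rewrite -(count_tiles T s) cUE cVE cWE.
have := sum_height_incr l HT Hh.
rewrite (eq_bigr (fun _ => h (padd y l) - h y)) => [|z _]; last exact: height_period_incr HT Hh Hl.
by rewrite big_const_seq count_predT iter_addr_0 sizeE cUE cVE /tilt; lia.
Qed.

End Repsys.

Section SinkFlip.
Variables (p q : pt) (T : pt -> tile) (h : pt -> int) (x : pt).
Hypotheses (T_tiling : is_tiling p q T) (h_height : is_height T h) (x_sink : is_sink T x).
Local Notation cong := (congL1 p q).

Definition sink_flip (y : pt) : tile :=
  if `[< cong y x >] then V
  else if `[< cong y (psub x pu) >] then U
  else if `[< cong y (padd x pv) >] then W
  else T y.

Definition sink_flip_height (y : pt) : int := if `[< cong y x >] then h y - 3 else h y.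

Variant sink_flip_spec (y : pt) : bool -> bool -> bool -> Prop :=
  | SinkFlipAt of T y = U : sink_flip_spec y true false false
  | SinkFlipLeft of T y = W : sink_flip_spec y false true false
  | SinkFlipAbove of T y = V : sink_flip_spec y false false true
  | SinkFlipAway : sink_flip_spec y false false false.

Lemma sink_flipP y :
  sink_flip_spec y `[< cong y x >] `[< cong y (psub x pu) >] `[< cong y (padd x pv) >].
Proof.
have [Tx [Txu Txv]] := x_sink; have Tinv := tiling_invariant T_tiling.
case: asboolP => [/Tinv yx | _]; case: asboolP => [/Tinv yxu | _];
  case: asboolP => [/Tinv yxv | _]; first [by constructor; congruence | congruence].
Qed.

Lemma sink_flip_stepu y :
  sink_flip_height (padd y pu) - sink_flip_height y = wu sink_flip y.
Proof.
have [hu _] := h_height y; move: hu.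
rewrite /sink_flip_height /wu /sink_flip (asbool_equiv_eq (congL1_addl p q y x pu)).
by case: sink_flipP => [-> | -> | -> | ] /=; lia.
Qed.

Lemma sink_flip_stepv y :
  sink_flip_height (padd y pv) - sink_flip_height y = wv sink_flip y.
Proof.
have [_ hv] := h_height y; move: hv.
rewrite /sink_flip_height /wv /sink_flip -(asbool_equiv_eq (congL1_translate p q y x pv)).
by case: (sink_flipP (padd y pv)) => [-> | -> | -> | ] /=; lia.
Qed.

Lemma sink_flip_is_height : is_height sink_flip sink_flip_height.
Proof. by move=> y; rewrite sink_flip_stepu sink_flip_stepv. Qed.

Lemma sink_flip_tiling : is_tiling p q sink_flip.
Proof.
split; last exact: height_locally_tiling sink_flip_is_height.
move=> y l Hl; rewrite /sink_flip !(asbool_equiv_eq (congL1_shiftl _ _ Hl)).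
by case: T_tiling => ->.
Qed.

Lemma sink_flip_step : flip_step p q T sink_flip.
Proof.
exists x; split=> [y nyx nyxu nyxv | ]; first by rewrite /sink_flip !asboolF.
by right; split=> // y; rewrite /sink_flip; split; [|split] => /asboolT; case: sink_flipP.
Qed.

End SinkFlip.

Section Descent.
Variables (p q : pt) (T2 : pt -> tile) (h2 : pt -> int) (s : seq pt).
Hypotheses (h2_height : is_height T2 h2) (s_repsys : repsys p q s).
Local Notation cong := (congL1 p q).

Definition admissible (T1 : pt -> tile) (h1 : pt -> int) (m : int) : Prop :=
  [/\ is_tiling p q T1, is_height T1 h1, congL1_invariant p q (fun y => h1 y - h2 y)
    & forall y, exists2 k : int, 0 <= k & h1 y - h2 y = m + 3 * k].

Definition excess (h1 : pt -> int) (m : int) : int := \sum_(y <- s) (h1 y - h2 y - m).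

Lemma admissible_exists T1 h1 : is_tiling p q T1 -> is_height T1 h1 ->
  congL1_invariant p q (fun y => h1 y - h2 y) -> exists m, admissible T1 h1 m.
Proof.
move=> T1_tiling h1_height Dinv.
have [xm Dmin] : exists xm, forall y, h2 y - h1 y <= h2 xm - h1 xm.
  by apply: (repsys_max s_repsys (f := fun y => h2 y - h1 y)) => y z /Dinv /=; lia.
exists (h1 xm - h2 xm); split=> // y; have [k Dk] := height_diff_mod3 y xm h1_height h2_height.
by exists k => //; have := Dmin y; lia.
Qed.

Lemma admissible_excess_ge0 T1 h1 m : admissible T1 h1 m -> 0 <= excess h1 m.
Proof. by case=> _ _ _ above; apply: sumr_ge0 => y _; have [k k0 ->] := above y; lia. Qed.

Lemma admissible_eq T1 h1 m : admissible T1 h1 m ->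
  (forall y, y \in s -> h1 y - h2 y <= m) -> T1 = T2.
Proof.
case=> _ h1_height Dinv above below; apply: (height_diff_const (c := m)) => // y.
have [r rs yr] := s_repsys.1 y; have := below r rs; rewrite -(Dinv _ _ yr).
by have [k k0 ->] := above y; lia.
Qed.

Lemma admissible_sink_flip T1 h1 m x : admissible T1 h1 m -> is_sink T1 x ->
  m < h1 x - h2 x -> admissible (sink_flip p q T1 x) (sink_flip_height p q h1 x) m.
Proof.
case=> T1_tiling h1_height Dinv above x_sink Dx; split.
- exact: sink_flip_tiling.
- exact: sink_flip_is_height.
- move=> y z yz; rewrite /sink_flip_height (asbool_equiv_eq (congL1_eql _ yz)).
  by have := Dinv _ _ yz; case: ifP; lia.
- move=> y; rewrite /sink_flip_height; case: asboolP => [yx | _]; last exact: above.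
  have [[k k0 Dk] Dyx] := (above y, Dinv _ _ yx).
  by exists (k - 1); lia.
Qed.

Lemma excess_sink_flip h1 m x : x \in s ->
  excess (sink_flip_height p q h1 x) m + 3 <= excess h1 m.
Proof.
move=> xs; have -> : excess h1 m =
    excess (sink_flip_height p q h1 x) m + \sum_(y <- s) (if `[< cong y x >] then 3 else 0).
  by rewrite /excess -big_split /=; apply: eq_bigr => y _; rewrite /sink_flip_height; case: ifP; lia.
rewrite lerD2l (big_rem _ xs) /= (asboolT (congL1_refl p q x)) lerDl.
by apply: sumr_ge0 => y _; case: ifP.
Qed.

Section Potential.
Variables cU cV cW : int.
Hypotheses (cU_gt0 : 0 < cU) (cV_gt0 : 0 < cV) (cW_gt0 : 0 < cW).
Hypothesis h2_slope :
  forall y l, inL1 p q l -> (cU + cV + cW) * (h2 (padd y l) - h2 y) = tilt cU cV cW l.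

(* Periodic by the slope of [h2].  Since N - tilt d is 3 cU, 3 cV, 3 cW for
   d = u, v, w, it strictly rises along every ascending step of [h2]. *)
Definition potential (y : pt) : int := (cU + cV + cW) * h2 y - tilt cU cV cW y.

Lemma potential_invariant : congL1_invariant p q potential.
Proof.
apply: congL1_invariantP => y l Hl; have := h2_slope y Hl.
rewrite /potential tiltD; lia.
Qed.

Lemma potential_rise x d : tilt cU cV cW d < cU + cV + cW ->
  h2 (padd x d) - h2 x = 1 -> potential x < potential (padd x d).
Proof. by rewrite /potential tiltD => ? ?; nia. Qed.

Section LexMax.
Variables (T1 : pt -> tile) (h1 : pt -> int) (x : pt).
Hypothesis h1_height : is_height T1 h1.
Hypothesis diff_max : forall y, h1 y - h2 y <= h1 x - h2 x.
Hypothesis potential_max :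
  forall y, h1 y - h2 y = h1 x - h2 x -> potential y <= potential x.

(* If h2 ascends along d, then h1 - h2 stays maximal only if h1 ascends too,
   which would raise the potential; hence h1 descends along d. *)
Lemma lexmax_step d b1 b2 : tilt cU cV cW d < cU + cV + cW ->
  h1 (padd x d) - h1 x = wt b1 -> h2 (padd x d) - h2 x = wt b2 -> b1.
Proof.
move=> tilt_lt; have := diff_max (padd x d).
case: b1 => //= le1 step1; case: b2 => /= step2; first lia.
have /potential_max : h1 (padd x d) - h2 (padd x d) = h1 x - h2 x by lia.
by have := potential_rise tilt_lt step2; lia.
Qed.

Lemma lexmax_is_sink : is_sink T1 x.
Proof.
have [[hu1 hv1] [hu2 hv2]] := (h1_height x, h2_height x).
have [hw1 hw2] := (height_stepw x h1_height, height_stepw x h2_height).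
have tilt_u : tilt cU cV cW pu < cU + cV + cW by rewrite /tilt /=; lia.
have tilt_v : tilt cU cV cW pv < cU + cV + cW by rewrite /tilt /=; lia.
have tilt_w : tilt cU cV cW pw < cU + cV + cW by rewrite /tilt /=; lia.
move: (lexmax_step tilt_u hu1 hu2) (lexmax_step tilt_v hv1 hv2) (lexmax_step tilt_w hw1 hw2).
by rewrite /is_sink; case: (T1 x); case: (T1 (psub x pu)); case: (T1 (padd x pv)).
Qed.

End LexMax.

Lemma max_diff_sink T1 h1 : is_height T1 h1 ->
    congL1_invariant p q (fun y => h1 y - h2 y) ->
  exists x, [/\ x \in s, is_sink T1 x & forall y, h1 y - h2 y <= h1 x - h2 x].
Proof.
move=> h1_height Dinv; have [xM Dmax] := repsys_max s_repsys Dinv.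
have Pinv : congL1_invariant p q (fun y => h1 y - h2 y == h1 xM - h2 xM).
  by move=> y z /Dinv /= ->.
have [x [xs /eqP DxM potmax]] :=
  repsys_argmax s_repsys potential_invariant Pinv (ex_intro _ xM (eqxx _)).
have Dmax' y : h1 y - h2 y <= h1 x - h2 x by rewrite DxM.
exists x; split=> //; apply: lexmax_is_sink h1_height Dmax' _ => y Dy.
by apply: potmax; rewrite Dy DxM.
Qed.

Lemma admissible_flip T1 h1 m y : admissible T1 h1 m -> m < h1 y - h2 y ->
  exists T1' h1',
    [/\ flip_step p q T1 T1', admissible T1' h1' m & excess h1' m + 3 <= excess h1 m].
Proof.
move=> adm Dy; have [T1_tiling h1_height Dinv _] := adm.
have [x [xs x_sink Dmax]] := max_diff_sink h1_height Dinv.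
exists (sink_flip p q T1 x), (sink_flip_height p q h1 x); split.
- exact: sink_flip_step.
- exact: admissible_sink_flip adm x_sink (lt_le_trans Dy (Dmax y)).
- exact: excess_sink_flip.
Qed.

Lemma admissible_flip_connected T1 h1 m : admissible T1 h1 m -> flip_connected p q T1 T2.
Proof.
move=> adm; have [n exc] : exists n : nat, excess h1 m <= n%:Z.
  by exists (absz (excess h1 m)); rewrite abszE ler_norm.
elim: n T1 h1 adm exc => [|n IH] T1 h1 adm exc.
all: have [/hasP [y _ Dy] | /hasPn below] := boolP (has (fun y => m < h1 y - h2 y) s);
  last by rewrite (admissible_eq adm) => [|y /below]; [exact: fc_refl | rewrite leNgt].
all: have [T1' [h1' [flip adm' exc']]] := admissible_flip adm Dy.
- by have := admissible_excess_ge0 adm'; lia.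
- by apply: fc_step flip (IH _ _ adm' _); lia.
Qed.

End Potential.

End Descent.

Theorem theorem6p41 (p q : pt) (T1 T2 : pt -> tile) (g1 g2 g3 : nat) :
  full_rank p q ->
  is_tiling p q T1 -> is_tiling p q T2 ->
  has_type p q T1 g1 g2 g3 -> has_type p q T2 g1 g2 g3 ->
  (0 < g1)%N -> (0 < g2)%N -> (0 < g3)%N ->
  flip_connected p q T1 T2.
Proof.
move=> _ T1_tiling T2_tiling [s1 [cover1 [sep1 [U1 [V1 W1]]]]]
  [s2 [cover2 [sep2 [U2 [V2 W2]]]]] g1_gt0 g2_gt0 g3_gt0.
have s2_repsys : repsys p q s2 := conj cover2 sep2.
have [h1 h1_height] := height_exists T1_tiling.2.
have [h2 h2_height] := height_exists T2_tiling.2.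
have slope1 := height_slope (conj cover1 sep1) T1_tiling h1_height U1 V1 W1.
have slope2 := height_slope s2_repsys T2_tiling h2_height U2 V2 W2.
have N_neq0 : g1%:Z + g2%:Z + g3%:Z != 0 by lia.
have [m adm] := admissible_exists h2_height s2_repsys T1_tiling h1_height
  (slope_diff_invariant N_neq0 slope1 slope2).
have [g1_pos g2_pos g3_pos] : [/\ 0 < g1%:Z, 0 < g2%:Z & 0 < g3%:Z] by split; lia.
exact (admissible_flip_connected h2_height s2_repsys g1_pos g2_pos g3_pos slope2 adm).
Qed.
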